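(* For every cycle $C$ on at least $4$ vertices, $4\le\pi_T(C)\le 6$.
   Context: A sequence is nonrepetitive if no block of consecutive terms has the form $r_1\dots r_nr_1\dots r_n$ with $n\ge1$. A (strong) total Thue colouring of a graph $G$ is a colouring of $V(G)\cup E(G)$ such that for every path $v_1,e_1,v_2,\dots,e_{k-1},v_k$ in $G$ the sequence of colours of $v_1,e_1,\dots,v_k$ is nonrepetitive, the sequence of colours of $v_1,\dots,v_k$ is nonrepetitive, and the sequence of colours of $e_1,\dots,e_{k-1}$ is nonrepetitive. $\pi_T(G)$ is the minimum number of colours in a total Thue colouring of $G$. *)

From mathcomp Require Import all_boot.
Set Implicit Arguments. Unset Strict Implicit. Unset Printing Implicit Defensive.

Definition nonrepetitive (A : eqType) (s : seq A) : Prop :=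
  forall a r b : seq A, r <> [::] -> s <> a ++ r ++ r ++ b.

(* A simple graph: vertex finType T with symmetric irreflexive adjacency e.
   A path v_1,...,v_k (k >= 1) is a sequence of pairwise distinct vertices
   with consecutive vertices adjacent. *)
Definition is_graph_path (T : finType) (e : rel T) (p : seq T) : bool :=
  [&& p != [::], sorted e p & uniq p].

Fixpoint edge_colours (T : finType) (C : Type) (ec : {set T} -> C) (p : seq T)
  : seq C :=
  match p with
  | x :: ((y :: _) as s) => ec [set x; y] :: edge_colours ec s
  | _ => [::]
  end.

Fixpoint total_colours (T : finType) (C : Type) (vc : T -> C)
  (ec : {set T} -> C) (p : seq T) : seq C :=
  match p with
  | [::] => [::]
  | [:: x] => [:: vc x]
  | x :: ((y :: _) as s) => vc x :: ec [set x; y] :: total_colours vc ec s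
  end.

Definition total_thue_colouring (T : finType) (e : rel T) (k : nat)
  (vc : T -> 'I_k) (ec : {set T} -> 'I_k) : Prop :=
  forall p : seq T, is_graph_path e p ->
    [/\ nonrepetitive (total_colours vc ec p),
        nonrepetitive (map vc p) &
        nonrepetitive (edge_colours ec p)].

Definition total_thue_colourable (T : finType) (e : rel T) (k : nat) : Prop :=
  exists (vc : T -> 'I_k) (ec : {set T} -> 'I_k), @total_thue_colouring T e k vc ec.

Definition cycle_adj (n : nat) : rel 'I_n :=
  fun i j => (j == (i.+1 %% n) :> nat) || (i == (j.+1 %% n) :> nat).

(* Lower bound: in the total sequence a0 b0 a1 b1 a2 b2 a3 of a path on four
   vertices every term differs from its predecessor and from the previous
   term of its own kind; with three colours this forces a0 b0 a1 a0 b0 a1 _,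
   a square.

   Upper bound: the ternary word w(i) = t(i+1) - t(i) + 1, with t the
   Thue--Morse word, is square-free because t is overlap-free.  On the cycle
   v_0 ... v_N, colour v_i (i < N) by w(i) in {0,1,2} and the edge v_i v_(i+1)
   by 3 + w(i) in {3,4,5}; v_N and the closing edge v_N v_0 take a colour of
   the other palette, distinct from their neighbours.  A path of the cycle is
   an arc, so its three colour sequences are factors of cyclic words of
   length at most one period.  The vertex and edge words are square-free
   there since their last letter is unique.  In the total word a square of
   even period restricts to the vertex or edge word; in a square of odd
   period matched terms have opposite types, so each of three consecutive
   matched pairs must involve one of the two off-palette terms, which are
   adjacent in the cycle: impossible. *)

From mathcomp Require Import all_boot zify.
Set Implicit Arguments. Unset Strict Implicit. Unset Printing Implicit Defensive.

Section Squares.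
Variable A : Type.
Implicit Types (u : nat -> A) (r m : nat).

Definition square_at u r m := forall j, j < m -> u (r + j) = u (r + m + j).
Definition overlap_at u r m := forall j, j <= m -> u (r + j) = u (r + m + j).
Definition squarefree u := forall r m, 0 < m -> ~ square_at u r m.
Definition overlapfree u := forall r m, 0 < m -> ~ overlap_at u r m.
Definition squarefree_upto u L := forall r m, 0 < m -> m.*2 <= L -> ~ square_at u r m.

End Squares.

Lemma squarefree_upto_le (A : Type) (u : nat -> A) L L' :
  L' <= L -> squarefree_upto u L -> squarefree_upto u L'.
Proof. by move=> le_L sqf r m m_gt0 le_m; apply: sqf => //; apply: leq_trans le_L. Qed.

Lemma squarefree_comp (A B : Type) (f : A -> B) (u : nat -> A) :
  injective f -> squarefree u -> squarefree (f \o u).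
Proof. by move=> f_inj sqf r m m_gt0 sq; apply: (sqf r m m_gt0) => j /sq /f_inj. Qed.

Lemma nonrepetitive_window (A : eqType) (s : seq A) (x0 : A) (u : nat -> A) c :
  (forall i, i < size s -> nth x0 s i = u (c + i)) -> squarefree_upto u (size s) ->
  nonrepetitive s.
Proof.
move=> s_u sqf a r b r_nil s_eq.
have r_gt0 : 0 < size r by rewrite lt0n size_eq0; apply/eqP.
have size_s : size a + (size r).*2 <= size s by rewrite s_eq !size_cat; lia.
apply: (sqf (c + size a) (size r) r_gt0); first lia.
have nth_catr s1 s2 k : nth x0 (s1 ++ s2) (size s1 + k) = nth x0 s2 k.
  by rewrite nth_cat ltnNge leq_addr /= addKn.
move=> j lt_j_r; rewrite -!addnA -!s_u; try lia.
by rewrite s_eq !nth_catr !nth_cat lt_j_r.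
Qed.

Lemma nonrepetitive_map (A B : eqType) (f : A -> B) (s : seq A) :
  injective f -> nonrepetitive (map f s) -> nonrepetitive s.
Proof.
move=> f_inj nrep a r b r_nil s_eq; apply: (nrep (map f a) (map f r) (map f b)).
  by apply: contra_not r_nil => /(congr1 size); rewrite size_map => /size0nil.
by rewrite s_eq !map_cat.
Qed.

Lemma nonrepetitive_rev (A : eqType) (s : seq A) :
  nonrepetitive s -> nonrepetitive (rev s).
Proof.
move=> nrep a r b r_nil s_eq; apply: (nrep (rev b) (rev r) (rev a)).
  by apply: contra_not r_nil => /(congr1 rev); rewrite revK.
by rewrite -(revK s) s_eq !rev_cat !catA.
Qed.

Lemma nonrepetitive_adjacent (A : eqType) (s t : seq A) x y :
  nonrepetitive (s ++ x :: y :: t) -> x <> y.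
Proof. by move=> nrep xy; apply: (nrep s [:: x] t); rewrite ?xy. Qed.

Lemma even_or_odd k : (exists j, k = j.*2) \/ (exists j, k = j.*2.+1).
Proof. by rewrite -[k]odd_double_half; case: (odd k); [right|left]; exists k./2. Qed.

(** * The Thue--Morse word and Thue's square-free ternary word *)

(* Halving reaches [0] after at most [n] steps, so the fuel [n.+1] suffices. *)
Fixpoint thue_morse_rec (fuel n : nat) : bool :=
  if fuel is fuel'.+1 then odd n (+) thue_morse_rec fuel' n./2 else false.

Definition thue_morse (n : nat) : bool := thue_morse_rec n.+1 n.

Lemma thue_morse_rec0 fuel : thue_morse_rec fuel 0 = false.
Proof. by elim: fuel => //= fuel ->. Qed.

Lemma thue_morse_rec_fuel f g n : n < f -> n < g ->
  thue_morse_rec f n = thue_morse_rec g n.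
Proof.
elim: f g n => [|f IHf] [|g] [|n] //= lt_n_f lt_n_g; first by rewrite !thue_morse_rec0.
by congr (_ (+) _); apply: IHf; lia.
Qed.

Lemma thue_morseE n : thue_morse n = odd n (+) thue_morse n./2.
Proof.
rewrite {1}/thue_morse /=; congr (_ (+) _).
by case: n => [|n]; [rewrite /thue_morse !thue_morse_rec0 | apply: thue_morse_rec_fuel; lia].
Qed.

Lemma thue_morse_double k : thue_morse k.*2 = thue_morse k.
Proof. by rewrite thue_morseE odd_double doubleK. Qed.

Lemma thue_morse_double1 k : thue_morse k.*2.+1 = ~~ thue_morse k.
Proof. by rewrite thue_morseE /= odd_double uphalf_double. Qed.

Definition thue_morseD := (thue_morse_double, thue_morse_double1).

Lemma thue_morse_even_step j : thue_morse j.*2 != thue_morse j.*2.+1.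
Proof. by rewrite !thue_morseD; case: (thue_morse j). Qed.

Lemma thue_morse_odd_step j :
  (thue_morse j.*2.+1 != thue_morse j.*2.+2) = (thue_morse j == thue_morse j.+1).
Proof.
by rewrite -[j.*2.+2]/(j.+1).*2 !thue_morseD; case: (thue_morse j); case: (thue_morse j.+1).
Qed.

Lemma thue_morse_no_cube k :
  ~ [/\ thue_morse k = thue_morse k.+1 & thue_morse k.+1 = thue_morse k.+2].
Proof.
have [[j ->]|[j ->]] := even_or_odd k => -[eq1 eq2].
  by move: (thue_morse_even_step j); rewrite eq1 eqxx.
by move: (thue_morse_even_step j.+1); rewrite doubleS eq2 eqxx.
Qed.

Lemma thue_morse_no_alternation i :
  ~ (forall d, d < 4 -> thue_morse (i + d) != thue_morse (i + d).+1).
Proof.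
have [[j ->]|[j ->]] := even_or_odd i => alt.
  have := alt 1 erefl; have := alt 3 erefl.
  rewrite addn1 addn3 -[j.*2.+3]/(j.+1.*2.+1) !thue_morse_odd_step => /eqP e2 /eqP e1.
  exact: (@thue_morse_no_cube j).
have := alt 0 erefl; have := alt 2 erefl.
rewrite addn0 addn2 -[j.*2.+3]/(j.+1.*2.+1) !thue_morse_odd_step => /eqP e2 /eqP e1.
exact: (@thue_morse_no_cube j).
Qed.

Lemma overlap_at_half p m :
  overlap_at thue_morse p m.*2 -> overlap_at thue_morse p./2 m.
Proof.
have [[w ->]|[w ->]] := even_or_odd p => ov j le_j_m; have := ov j.*2;
  rewrite leq_double /= ?doubleK ?uphalf_double ?addSn -!doubleD !thue_morseD => /(_ le_j_m).
  by [].
by move/negb_inj.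
Qed.

Lemma thue_morse_overlapfree : overlapfree thue_morse.
Proof.
move=> p m; elim/ltn_ind: m p => m IH p m_gt0 ov.
have [[k m_eq]|[[|k] m_eq]] := even_or_odd m; subst m.
- have k_gt0 : 0 < k by rewrite -double_gt0.
  apply: (IH k _ p./2 k_gt0 (overlap_at_half ov)).
  by rewrite -addnn -{1}[k]add0n ltn_add2r.
- have := ov 0 erefl; have := ov 1 erefl; rewrite /= !addn0 !addn1 => e1 e0.
  exact: (@thue_morse_no_cube p).
set m := k.+1.*2.+1 in ov m_gt0; clear IH.
have alt d : d < m -> thue_morse (p + d) != thue_morse (p + d).+1.
  move=> lt_d_m; have [[w pd_eq]|[w pd_eq]] := even_or_odd (p + d).
    by rewrite pd_eq thue_morse_even_step.
  rewrite (ov d (ltnW lt_d_m)) -addnS (ov d.+1 lt_d_m) addnS.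
  have -> : p + m + d = (w + k.+2).*2 by rewrite /m; lia.
  exact: thue_morse_even_step.
apply: (@thue_morse_no_alternation p) => d lt_d_4.
have [|le_m_d] := ltnP d m; first exact: alt.
have [-> m_eq] : d = 3 /\ m = 3 by rewrite /m in le_m_d *; lia.
have := ov 0 isT; have := ov 1 isT; rewrite m_eq !addn0 !addn1 => <- <-.
by have := alt 0 isT; rewrite addn0.
Qed.

(* The subtraction never truncates: its values are 0, 1, 2. *)
Definition thue_ternary (i : nat) : nat := thue_morse i.+1 + 1 - thue_morse i.

Lemma thue_ternary_lt3 i : thue_ternary i < 3.
Proof. by rewrite /thue_ternary; case: (thue_morse _); case: (thue_morse _). Qed.

Lemma thue_ternary_eq i k : thue_ternary i = thue_ternary k ->
  if thue_morse i == thue_morse k then thue_morse i.+1 = thue_morse k.+1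
  else thue_morse i.+1 = thue_morse i /\ thue_morse k.+1 = thue_morse k.
Proof.
rewrite /thue_ternary.
by case: (thue_morse i); case: (thue_morse i.+1); case: (thue_morse k); case: (thue_morse k.+1).
Qed.

Lemma thue_ternary_squarefree : squarefree thue_ternary.
Proof.
(* A letter of the ternary word together with t(i) determines t(i+1), so a
   square either lifts to an overlap of t or keeps t constant along it. *)
move=> r m m_gt0 sq.
have step j (lt_j_m : j < m) := thue_ternary_eq (sq j lt_j_m).
have [eq_r|neq_r] := eqVneq (thue_morse r) (thue_morse (r + m)).
  apply: (thue_morse_overlapfree m_gt0 (r := r)).
  elim=> [|j IHj] le_j_m; first by rewrite !addn0.
  have := step j le_j_m; rewrite !addnS IHj ?eqxx //; exact: ltnW.
suff const j : j <= m -> thue_morse (r + j) = thue_morse r /\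
                          thue_morse (r + m + j) = thue_morse (r + m).
  by case/negP: neq_r; rewrite -(const m (leqnn m)).1.
elim: j => [|j IHj] lt_j_m; first by rewrite !addn0.
have [eq1 eq2] := IHj (ltnW lt_j_m).
by have := step j lt_j_m; rewrite eq1 eq2 ifN // !addnS => -[-> ->].
Qed.

(** * Cyclic words *)

Lemma cyclic_squarefree (A : Type) (u g : nat -> A) (P : nat) :
  squarefree u ->
  (forall k, k < P.-1 -> g k = u k) ->
  (forall k, k < P.-1 -> g P.-1 <> g k) ->
  squarefree_upto (fun k => g (k %% P)) P.
Proof.
move=> sqf_u g_u g_last q m m_gt0 le_2m_P sq.
set r := q %% P.
have lt_r_P : r < P by rewrite ltn_pmod //; lia.
have sq_r : square_at (fun k => g (k %% P)) r m.
  by move=> j /sq; rewrite /= -!addnA !modnDml.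
have gP k : k < P.-1 -> g (k %% P) = u k.
  by move=> lt_k; rewrite modn_small ?g_u //; lia.
have [fits|wraps] := leqP (r + m.*2) P.-1.
  by apply: (sqf_u r m m_gt0) => j lt_j_m; rewrite -!gP ?sq_r //; lia.
(* Otherwise the block covers position [P.-1], whose letter is matched with
   another one. *)
set k := P.-1 - r.
have last_k : (r + k) %% P = P.-1 by rewrite modn_small; lia.
have [lt_k_m|le_m_k] := ltnP k m.
  apply: (g_last m.-1); first lia.
  have := sq_r k lt_k_m; rewrite /= last_k => ->.
  have -> : r + m + k = m.-1 + P by lia.
  by rewrite modnDr modn_small //; lia.
apply: (g_last (r + (k - m))); first lia.
have lt_km_m : k - m < m by lia.
have := sq_r _ lt_km_m; rewrite /= -addnA subnKC // last_k modn_small => [-> //|]; lia.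
Qed.

Section ColourSequences.
Variables (T : finType) (C : Type) (vc : T -> C) (ec : {set T} -> C).

Lemma size_edge_colours s : size (edge_colours ec s) = (size s).-1.
Proof. by elim: s => [|x [|y s] IHs] //=; rewrite IHs. Qed.

Lemma size_total_colours s : size (total_colours vc ec s) = (size s).*2.-1.
Proof. by elim: s => [|x [|y s] IHs] //=; rewrite IHs. Qed.

Lemma nth_edge_colours c0 x0 s i : i.+1 < size s ->
  nth c0 (edge_colours ec s) i = ec [set nth x0 s i; nth x0 s i.+1].
Proof. by elim: s i => [|x [|y s] IHs] [|i] //= lt_i; rewrite IHs. Qed.

Lemma nth_total_colours_vertex c0 x0 s i : i < size s ->
  nth c0 (total_colours vc ec s) i.*2 = vc (nth x0 s i).
Proof. by elim: s i => [|x [|y s] IHs] [|i] //= lt_i; rewrite IHs. Qed.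

Lemma nth_total_colours_edge c0 x0 s i : i.+1 < size s ->
  nth c0 (total_colours vc ec s) i.*2.+1 = ec [set nth x0 s i; nth x0 s i.+1].
Proof. by elim: s i => [|x [|y s] IHs] [|i] //= lt_i; rewrite IHs. Qed.

Lemma edge_colours_rcons s x y :
  edge_colours ec (rcons (rcons s x) y) = rcons (edge_colours ec (rcons s x)) (ec [set x; y]).
Proof. by elim: s => [|z [|w s] IHs] //=; rewrite -IHs. Qed.

Lemma total_colours_rcons s x y :
  total_colours vc ec (rcons (rcons s x) y) =
  total_colours vc ec (rcons s x) ++ [:: ec [set x; y]; vc y].
Proof. by elim: s => [|z [|w s] IHs] //=; rewrite -IHs. Qed.

Lemma edge_colours_rev s : edge_colours ec (rev s) = rev (edge_colours ec s).
Proof.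
elim/last_ind: s => [|s x IHs] //; case/lastP: s IHs => [|s y] IHs //.
by rewrite edge_colours_rcons !rev_rcons -IHs rev_rcons /= setUC.
Qed.

Lemma total_colours_rev s : total_colours vc ec (rev s) = rev (total_colours vc ec s).
Proof.
elim/last_ind: s => [|s x IHs] //; case/lastP: s IHs => [|s y] IHs //.
by rewrite total_colours_rcons rev_cat !rev_rcons -IHs rev_rcons /= setUC.
Qed.

End ColourSequences.

Lemma uniq_sorted_fpath (T : eqType) (e : rel T) (f : T -> T) :
  injective f -> (forall a b, e a b -> b = f a \/ a = f b) ->
  forall x y s, uniq [:: x, y & s] -> sorted e [:: x, y & s] -> y = f x ->
  fpath f x (y :: s).
Proof.
move=> f_inj e_f x y s; elim: s x y => [|z s IHs] x y uniq_xys sorted_xys y_eq.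
  by rewrite /= y_eq eqxx.
rewrite [fpath _ _ _]/= y_eq eqxx -y_eq /=.
case/andP: sorted_xys => _ sorted_yzs; have /andP [x_notin uniq_yzs] := uniq_xys.
apply: IHs => //; have /andP [e_yz _] := sorted_yzs.
case: (e_f _ _ e_yz) => // /esym; rewrite y_eq => /f_inj z_eq.
by move: x_notin; rewrite z_eq !inE eqxx orbT.
Qed.

Lemma rev_traject (T : Type) (f g : T -> T) : cancel g f ->
  forall x k, rev (traject g x k.+1) = traject f (iter k g x) k.+1.
Proof.
move=> gK x k; elim: k x => [|k IHk] x //.
have iterK y j : iter j f (iter j g y) = y.
  by elim: j => [|j IHj] //; rewrite [iter j.+1 f _]iterSr iterS gK.
by rewrite trajectS rev_cons IHk -iterSr [RHS]trajectSr iterK.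
Qed.

Section CyclePaths.
Variable n : nat.

Lemma cycle_adj_ordS (a b : 'I_n) : cycle_adj a b -> b = ordS a \/ a = ordS b.
Proof. by case/orP => /eqP eq_ab; [left|right]; apply: val_inj. Qed.

Lemma cycle_adj_ord_pred (a b : 'I_n) : cycle_adj a b -> b = ord_pred a \/ a = ord_pred b.
Proof. by case/cycle_adj_ordS => ->; rewrite ordSK; [right|left]. Qed.

Lemma cycle_path_traject (p : seq 'I_n) : is_graph_path (@cycle_adj n) p ->
  exists x, p = traject (@ordS n) x (size p) \/ rev p = traject (@ordS n) x (size p).
Proof.
case: p => [|x [|y s]] /and3P [_ sorted_p uniq_p] //; first by exists x; left.
have [y_eq|x_eq] := cycle_adj_ordS (proj1 (andP sorted_p)).
  have fw := uniq_sorted_fpath (@ordS_inj n) (@cycle_adj_ordS) uniq_p sorted_p y_eq.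
  by exists x; left; rewrite {1}[y :: s](fpathE fw) -trajectS.
have y_eq : y = ord_pred x by rewrite x_eq ordSK.
have bw := uniq_sorted_fpath (@ord_pred_inj n) (@cycle_adj_ord_pred) uniq_p sorted_p y_eq.
exists (iter (size s).+1 (@ord_pred n) x); right.
by rewrite {1}[y :: s](fpathE bw) -trajectS (rev_traject (@ord_predK n)).
Qed.

Lemma val_iter_ordS (x : 'I_n) i : val (iter i (@ordS n) x) = (x + i) %% n.
Proof.
elim: i => [|i IHi] /=; first by rewrite addn0 modn_small.
by rewrite IHi -addn1 modnDml addn1 addnS.
Qed.

Lemma ordS_ordS_neq (v : 'I_n) : 2 < n -> ordS (ordS v) != v.
Proof.
move=> n_gt2; apply/eqP => /(congr1 (@nat_of_ord n)).
rewrite -[ordS (ordS v)]/(iter 2 (@ordS n) v) val_iter_ordS.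
have lt_v_n := ltn_ord v.
have [lt_v2_n|le_n_v2] := ltnP (v + 2) n; first by rewrite modn_small //; lia.
by rewrite -(subnK le_n_v2) modnDr modn_small; lia.
Qed.

Lemma cycle_edge_inj (u v : 'I_n) : 2 < n ->
  [set u; ordS u] = [set v; ordS v] -> u = v.
Proof.
move=> n_gt2 uv_eq.
have := set21 u (ordS u); have := set22 u (ordS u); rewrite uv_eq !in_set2.
case/orP=> /eqP Su_eq /orP [/eqP //|/eqP u_eq].
  by move: (ordS_ordS_neq v n_gt2); rewrite -u_eq Su_eq eqxx.
exact: ordS_inj.
Qed.

End CyclePaths.

(** * A total Thue colouring of the cycle with six colours *)

Section CycleColouring.
Variable N : nat.

(* Vertices and positions are read modulo [N.+1]; edge [i] is v_i v_(i+1). *)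

Definition vertex_colour (i : nat) : nat :=
  if i < N then thue_ternary i else 3 + (thue_ternary N.-1).+1 %% 3.

Definition edge_colour (i : nat) : nat :=
  if i < N then 3 + thue_ternary i else (thue_ternary 0).+1 %% 3.

(* The colours of the periodic sequence v_0, e_0, v_1, e_1, ..., v_N, e_N, v_0, ... *)
Definition total_word (j : nat) : nat :=
  if odd j then edge_colour (j./2 %% N.+1) else vertex_colour (j./2 %% N.+1).

(* Position [j] of the total word holds v_N or e_N, the two terms whose colour
   is taken from the palette of the other type. *)
Definition off_palette (j : nat) : bool := j./2 %% N.+1 == N.

Lemma vertex_colour_lt6 i : vertex_colour i < 6.
Proof. by rewrite /vertex_colour; have := thue_ternary_lt3 i; case: ifP => _; lia. Qed.

Lemma edge_colour_lt6 i : edge_colour i < 6.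
Proof. by rewrite /edge_colour; have := thue_ternary_lt3 i; case: ifP => _; lia. Qed.

Lemma vertex_word_squarefree :
  squarefree_upto (fun k => vertex_colour (k %% N.+1)) N.+1.
Proof.
apply: (cyclic_squarefree thue_ternary_squarefree) => k lt_k_N.
  by rewrite /vertex_colour lt_k_N.
by rewrite /vertex_colour lt_k_N ltnn; have := thue_ternary_lt3 k; lia.
Qed.

Lemma edge_word_squarefree :
  squarefree_upto (fun k => edge_colour (k %% N.+1)) N.+1.
Proof.
apply: (cyclic_squarefree (squarefree_comp (@addnI 3) thue_ternary_squarefree)).
  by move=> k lt_k_N; rewrite /edge_colour lt_k_N.
by move=> k lt_k_N; rewrite /edge_colour lt_k_N ltnn; have := thue_ternary_lt3 0; lia.
Qed.

Lemma total_word_double w : total_word w.*2 = vertex_colour (w %% N.+1).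
Proof. by rewrite /total_word odd_double doubleK. Qed.

Lemma total_word_double1 w : total_word w.*2.+1 = edge_colour (w %% N.+1).
Proof. by rewrite /total_word /= odd_double uphalf_double. Qed.

Lemma total_word_low k : (total_word k < 3) = (odd k == off_palette k).
Proof.
rewrite /total_word /off_palette /vertex_colour /edge_colour.
have := ltn_pmod k./2 (ltn0Sn N); have := thue_ternary_lt3 (k./2 %% N.+1).
by case: (odd k); case: (ltngtP (k./2 %% N.+1) N) => //=; lia.
Qed.

Lemma total_word_adjacent q : 0 < N -> total_word q != total_word q.+1.
Proof.
move=> N_gt0; have lt3 := thue_ternary_lt3.
have [[w ->]|[w ->]] := even_or_odd q.
  rewrite total_word_double total_word_double1 /vertex_colour /edge_colour.
  by have := lt3 (w %% N.+1); have := lt3 N.-1; have := lt3 0; case: ifP; lia.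
rewrite -doubleS total_word_double total_word_double1.
have -> : w.+1 %% N.+1 = (w %% N.+1).+1 %% N.+1.
  by rewrite -[(w %% _).+1]addn1 modnDml addn1.
have := ltn_pmod w (ltn0Sn N); set i := w %% N.+1 => lt_i_N1.
have [lt_i_N|i_eq] : i < N \/ i = N by lia.
  rewrite modn_small // /vertex_colour /edge_colour lt_i_N.
  have := lt3 i; have := lt3 i.+1; have := lt3 N.-1; by case: (ltngtP i.+1 N) => [||<-] /=; lia.
rewrite i_eq modnn /vertex_colour /edge_colour N_gt0 ltnn.
by have := lt3 0; lia.
Qed.

Lemma off_palette_near x y : off_palette x -> off_palette y ->
  x <= y + N.*2 -> x <= y.+1.
Proof.
move=> /eqP off_x /eqP off_y le_x_y.
have := divn_eq x./2 N.+1; have := divn_eq y./2 N.+1; rewrite off_x off_y.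
have := odd_double_half x; have := odd_double_half y.
set a := x./2 %/ N.+1; set b := y./2 %/ N.+1.
have [le_a_b|lt_b_a] := leqP a b.
  have : a * N.+1 <= b * N.+1 by rewrite leq_mul2r le_a_b orbT.
  lia.
have : b.+1 * N.+1 <= a * N.+1 by rewrite leq_mul2r lt_b_a orbT.
rewrite mulSn; lia.
Qed.

Lemma off_palette_of_eq a b : odd a != odd b -> total_word a = total_word b ->
  off_palette a || off_palette b.
Proof.
move=> odd_ab /(congr1 (fun c => c < 3)); rewrite !total_word_low.
by move: odd_ab; case: (odd a); case: (odd b); case: (off_palette a); case: (off_palette b).
Qed.

Lemma square_at_total_word_off q m j : odd m -> square_at total_word q m -> j < m ->
  off_palette (q + j) || off_palette (q + m + j).
Proof.
move=> odd_m sq lt_j_m; apply: off_palette_of_eq (sq j lt_j_m).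
by rewrite addnAC [odd (_ + m)]oddD odd_m addbT; case: odd.
Qed.

Lemma total_word_squarefree : 1 < N -> squarefree_upto total_word N.*2.+1.
Proof.
move=> N_gt1 q m m_gt0 le_m_N sq.
have [[k m_eq]|[[|k] m_eq]] := even_or_odd m; subst m.
- have k_gt0 : 0 < k by rewrite -double_gt0.
  have le_k_N : k.*2 <= N.+1 by rewrite -leq_double; lia.
  have [[w q_eq]|[w q_eq]] := even_or_odd q; subst q.
    apply: (@vertex_word_squarefree w k k_gt0 le_k_N) => j lt_j_k.
    by have := sq j.*2; rewrite ltn_double -!doubleD !total_word_double => ->.
  apply: (@edge_word_squarefree w k k_gt0 le_k_N) => j lt_j_k.
  by have := sq j.*2; rewrite ltn_double !addSn -!doubleD !total_word_double1 => ->.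
- have := sq 0 isT; rewrite /= !addn0 addn1 => eq_q.
  by move: (total_word_adjacent q (ltnW N_gt1)); rewrite eq_q eqxx.
set m := k.+1.*2.+1 in le_m_N sq.
have off j : j < 3 -> exists x, off_palette x /\ (x = q + j \/ x = q + m + j).
  move=> lt_j_3; have lt_j_m : j < m by rewrite /m; lia.
  have odd_m : odd m by rewrite /m /= odd_double.
  case/orP: (square_at_total_word_off odd_m sq lt_j_m) => off_x.
    by exists (q + j); split; [|left].
  by exists (q + m + j); split; [|right].
have [x0 [off0 x0_eq]] := off 0 isT.
have [x1 [off1 x1_eq]] := off 1 isT.
have [x2 [off2 x2_eq]] := off 2 isT.
have near := @off_palette_near.
have := near _ _ off0 off1; have := near _ _ off1 off0; have := near _ _ off0 off2.
have := near _ _ off2 off0; have := near _ _ off1 off2; have := near _ _ off2 off1.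
rewrite /m in x0_eq x1_eq x2_eq le_m_N; lia.
Qed.

Definition vertex_colouring (v : 'I_N.+1) : 'I_6 := inord (vertex_colour v).

Definition edge_colouring (E : {set 'I_N.+1}) : 'I_6 :=
  if [pick v | E == [set v; ordS v]] is Some v then inord (edge_colour v) else ord0.

Lemma val_vertex_colouring v : val (vertex_colouring v) = vertex_colour v.
Proof. by rewrite /= inordK // vertex_colour_lt6. Qed.

Lemma val_edge_colouring v : 1 < N -> val (edge_colouring [set v; ordS v]) = edge_colour v.
Proof.
move=> N_gt1; rewrite /edge_colouring; case: pickP => [u /eqP uv_eq|/(_ v)]; last by rewrite eqxx.
by rewrite (cycle_edge_inj _ uv_eq) /= ?inordK ?edge_colour_lt6.
Qed.

Lemma traject_colours_nonrepetitive x k : 1 < N -> k <= N.+1 ->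
  let s := traject (@ordS N.+1) x k in
  [/\ nonrepetitive (total_colours vertex_colouring edge_colouring s),
      nonrepetitive (map vertex_colouring s) &
      nonrepetitive (edge_colours edge_colouring s)].
Proof.
move=> N_gt1 le_k_N s.
have nth_s i : i < k -> val (nth x s i) = (x + i) %% N.+1.
  by move=> lt_i_k; rewrite nth_traject // val_iter_ordS.
have edge_s i : i.+1 < k -> val (edge_colouring [set nth x s i; nth x s i.+1]) =
                              edge_colour ((x + i) %% N.+1).
  move=> lt_i_k; rewrite !nth_traject ?(ltnW lt_i_k) // iterS val_edge_colouring //.
  by rewrite val_iter_ordS.
have size_s : size s = k by rewrite size_traject.
split; apply: (nonrepetitive_map val_inj).
- apply: (@nonrepetitive_window _ _ 0 total_word x.*2);
    rewrite size_map size_total_colours size_s; last first.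
    by apply: squarefree_upto_le (total_word_squarefree N_gt1); lia.
  move=> j lt_j; rewrite (nth_map ord0) ?size_total_colours ?size_s //.
  have [[i j_eq]|[i j_eq]] := even_or_odd j; subst j.
    rewrite (@nth_total_colours_vertex _ _ _ _ _ x) ?val_vertex_colouring ?nth_s ?size_s; try lia.
    by rewrite -doubleD total_word_double.
  rewrite (@nth_total_colours_edge _ _ _ _ _ x) ?edge_s ?size_s; try lia.
  by rewrite addnS -doubleD total_word_double1.
- apply: (@nonrepetitive_window _ _ 0 (fun i => vertex_colour (i %% N.+1)) x);
    rewrite !size_map size_s; last exact: squarefree_upto_le le_k_N vertex_word_squarefree.
  by move=> i lt_i; rewrite (nth_map ord0) ?size_map ?size_s // (nth_map x) ?size_s //= 
    val_vertex_colouring nth_s.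
- apply: (@nonrepetitive_window _ _ 0 (fun i => edge_colour (i %% N.+1)) x);
    rewrite size_map size_edge_colours size_s; last first.
    by apply: squarefree_upto_le edge_word_squarefree; lia.
  move=> i lt_i; rewrite (nth_map ord0) ?size_edge_colours ?size_s //.
  by rewrite (@nth_edge_colours _ _ _ _ x) ?edge_s ?size_s; lia.
Qed.

Lemma cycle_total_thue_colouring : 1 < N ->
  total_thue_colouring (@cycle_adj N.+1) vertex_colouring edge_colouring.
Proof.
move=> N_gt1 p p_path.
have size_p : size p <= N.+1.
  have /card_uniqP <- : uniq p by case/and3P: p_path.
  by rewrite (leq_trans (max_card _)) ?card_ord.
have [x [p_eq|rev_p_eq]] := cycle_path_traject p_path.
  by rewrite p_eq; apply: traject_colours_nonrepetitive.
have [] := traject_colours_nonrepetitive x N_gt1 size_p.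
rewrite -rev_p_eq total_colours_rev edge_colours_rev map_rev.
by move=> /nonrepetitive_rev + /nonrepetitive_rev + /nonrepetitive_rev; rewrite !revK.
Qed.

End CycleColouring.

(** * Four colours are needed *)

Lemma total_thue_colourable_ge4 (T : finType) (e : rel T) (v0 v1 v2 v3 : T) k :
  is_graph_path e [:: v0; v1; v2; v3] -> total_thue_colourable e k -> 3 < k.
Proof.
move=> path4 [vc [ec /(_ _ path4) [tot vert edge]]]; rewrite ltnNge; apply/negP => le_k_3.
move: tot vert edge => /=.
set a0 := vc v0; set a1 := vc v1; set a2 := vc v2; set a3 := vc v3.
set b0 := ec [set v0; v1]; set b1 := ec [set v1; v2]; set b2 := ec [set v2; v3].
move=> tot vert edge.
have ne (s t : seq 'I_k) x y : nonrepetitive (s ++ x :: y :: t) -> x <> y :> nat.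
  by move=> /nonrepetitive_adjacent xy /val_inj.
have := ne [::] _ _ _ tot; have := ne [:: a0] _ _ _ tot.
have := ne [:: a0; b0] _ _ _ tot; have := ne [:: a0; b0; a1] _ _ _ tot.
have := ne [:: a0; b0; a1; b1] _ _ _ tot.
have := ne [::] _ _ _ vert; have := ne [:: a0] _ _ _ vert.
have := ne [::] _ _ _ edge; have := ne [:: b0] _ _ _ edge.
have := ltn_ord a0; have := ltn_ord a1; have := ltn_ord a2.
have := ltn_ord b0; have := ltn_ord b1; have := ltn_ord b2.
move=> *.
suff [e1 e2 e3] : [/\ a0 = b1, b0 = a2 & a1 = b2].
  by apply: (tot [::] [:: a0; b0; a1] [:: a3]); rewrite e1 e2 e3.
by split; apply: val_inj => /=; lia.
Qed.

Lemma cycle_path4 N : 2 < N ->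
  is_graph_path (@cycle_adj N.+1) [:: inord 0; inord 1; inord 2; inord 3].
Proof.
move=> N_gt2.
have adj i : i < 3 -> cycle_adj (inord i : 'I_N.+1) (inord i.+1).
  by move=> lt_i_3; apply/orP; left; rewrite !inordK ?modn_small //; lia.
rewrite /is_graph_path /= !adj // !inE -!val_eqE /= !inordK; lia.
Qed.

Theorem corollary16 (n : nat) (hn : 4 <= n) :
  (forall k : nat, k < 4 -> ~ total_thue_colourable (@cycle_adj n) k) /\
  total_thue_colourable (@cycle_adj n) 6.
Proof.
case: n hn => [|N] // N_gt2; split.
  move=> k lt_k_4 /(total_thue_colourable_ge4 (cycle_path4 N_gt2)).
  by rewrite ltnNge -ltnS lt_k_4.
exists (@vertex_colouring N), (@edge_colouring N).
by apply: cycle_total_thue_colouring; apply: ltnW.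
Qed.
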